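(* Let $T\subset\mathbb{R}^2$ be a closed triangle with vertices $A=(x_a,y_a)$, $B=(x_b,y_b)$, $O=(x_o,y_o)$ with $y_a=y_b>y_o$, and let $C$ be a point of the open segment $(A,B)$. Put $T'=T\setminus\{A,B\}$ and $T''=T\setminus(\{A\}\cup[B,C])$, where $[B,C]$ is the closed segment from $B$ to $C$. Then there exists a homeomorphism $f:T'\to T''$ preserving the second coordinate (i.e. $f(x,y)=(f_1(x,y),y)$). In particular $f$ is the identity on the sides $(A,O]$ and $[O,B)$, and $f$ maps the open segment $(A,B)$ onto the open segment $(A,C)$. *)

From Stdlib Require Import Reals.
Open Scope R_scope.

Definition pt : Type := (R * R)%type.

Definition dist2 (p q : pt) : R :=
  sqrt ((fst p - fst q) ^ 2 + (snd p - snd q) ^ 2).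

Definition cont_on (S : pt -> Prop) (f : pt -> pt) : Prop :=
  forall p, S p -> forall eps, 0 < eps ->
    exists delta, 0 < delta /\
      forall q, S q -> dist2 p q < delta -> dist2 (f p) (f q) < eps.

Definition homeo_on (S S' : pt -> Prop) (f : pt -> pt) : Prop :=
  (forall p, S p -> S' (f p)) /\
  cont_on S f /\
  exists g : pt -> pt,
    (forall q, S' q -> S (g q)) /\
    cont_on S' g /\
    (forall p, S p -> g (f p) = p) /\
    (forall q, S' q -> f (g q) = q).

Definition lerp (P Q : pt) (t : R) : pt :=
  ((1 - t) * fst P + t * fst Q, (1 - t) * snd P + t * snd Q).

Definition in_triangle (A B O X : pt) : Prop :=
  exists a b c, 0 <= a /\ 0 <= b /\ 0 <= c /\ a + b + c = 1 /\
    X = (a * fst A + b * fst B + c * fst O, a * snd A + b * snd B + c * snd O).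

Definition closed_seg (P Q X : pt) : Prop := exists t, 0 <= t <= 1 /\ X = lerp P Q t.
Definition open_seg (P Q X : pt) : Prop := exists t, 0 < t < 1 /\ X = lerp P Q t.
Definition lopen_seg (P Q X : pt) : Prop := exists t, 0 < t <= 1 /\ X = lerp P Q t.

From Stdlib Require Import Reals Lra.
From Coquelicot Require Import Coquelicot.
Open Scope R_scope.

(* In affine coordinates (b, s) with A = (0,0), B = (1,0), O = (0,1), the second coordinate
   depends on s alone, so it suffices to build a homeomorphism acting on each row s = const.
   Row s > 0 is the segment 0 <= b <= 1 - s, and we map it onto itself by the piecewise-linear
   b |-> max (c b, l_s b), where l_s is the line through (1 - s, 1 - s) of slope (1 - c + c s)/s.
   As s -> 0 that slope blows up, so the limit on the bottom row is b |-> c b, which sends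
   (A, B) onto (A, C); continuity survives there because l_s b < c b near every (b, 0) with
   b < 1, i.e. away from the removed vertex B.  The inverse, min (v / c, l_s^-1 v), is given by
   one formula that is continuous up to and including s = 0. *)

Lemma continuous_Rplus_comp {U : UniformSpace} (f g : U -> R) x :
  continuous f x -> continuous g x -> continuous (fun y => f y + g y) x.
Proof. exact (continuous_plus f g x). Qed.

Lemma continuous_Rminus_comp {U : UniformSpace} (f g : U -> R) x :
  continuous f x -> continuous g x -> continuous (fun y => f y - g y) x.
Proof. exact (continuous_minus f g x). Qed.

Lemma continuous_Rmult_comp {U : UniformSpace} (f g : U -> R) x :
  continuous f x -> continuous g x -> continuous (fun y => f y * g y) x.
Proof. exact (continuous_mult f g x). Qed.

Lemma continuous_Rdiv_comp {U : UniformSpace} (f g : U -> R) x :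
  continuous f x -> continuous g x -> g x <> 0 -> continuous (fun y => f y / g y) x.
Proof.
  intros Hf Hg Hgx. apply continuous_Rmult_comp; [exact Hf |].
  apply (continuous_comp g Rinv); [exact Hg | exact (continuous_Rinv _ Hgx)].
Qed.

Lemma continuous_Rmax_comp {U : UniformSpace} (f g : U -> R) x :
  continuous f x -> continuous g x -> continuous (fun y => Rmax (f y) (g y)) x.
Proof.
  intros Hf Hg.
  apply (continuous_ext (fun y => (f y + g y + Rabs (f y - g y)) / 2)).
  - intros y. unfold Rmax. destruct (Rle_dec (f y) (g y)).
    + rewrite Rabs_left1 by lra. lra.
    + rewrite Rabs_right by lra. lra.
  - apply continuous_Rdiv_comp; [| apply continuous_const | lra].
    apply continuous_Rplus_comp; [apply continuous_Rplus_comp; assumption |].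
    apply (continuous_comp (fun y => f y - g y) Rabs).
    + apply continuous_Rminus_comp; assumption.
    + apply continuous_Rabs.
Qed.

Lemma continuous_Rmin_comp {U : UniformSpace} (f g : U -> R) x :
  continuous f x -> continuous g x -> continuous (fun y => Rmin (f y) (g y)) x.
Proof.
  intros Hf Hg.
  apply (continuous_ext (fun y => 0 - Rmax (0 - f y) (0 - g y))).
  - intros y. unfold Rmin, Rmax.
    destruct (Rle_dec (f y) (g y)), (Rle_dec (0 - f y) (0 - g y)); lra.
  - apply continuous_Rminus_comp; [apply continuous_const |].
    apply continuous_Rmax_comp; apply continuous_Rminus_comp;
      (apply continuous_const || assumption).
Qed.

Lemma continuous_fst_pt {U V : UniformSpace} (p : U * V) : continuous fst p.
Proof. destruct p; apply continuous_fst. Qed.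

Lemma continuous_snd_pt {U V : UniformSpace} (p : U * V) : continuous snd p.
Proof. destruct p; apply continuous_snd. Qed.

Ltac continuity_R :=
  repeat lazymatch goal with
  | |- continuous (fun _ => ?k) _ => apply continuous_const
  | |- continuous (fun y => fst y) _ => apply continuous_fst_pt
  | |- continuous (fun y => snd y) _ => apply continuous_snd_pt
  | |- continuous (fun y => @?f y + @?g y) _ => apply (continuous_Rplus_comp f g)
  | |- continuous (fun y => @?f y - @?g y) _ => apply (continuous_Rminus_comp f g)
  | |- continuous (fun y => @?f y * @?g y) _ => apply (continuous_Rmult_comp f g)
  | |- continuous (fun y => @?f y / @?g y) _ => apply (continuous_Rdiv_comp f g)
  | |- continuous (fun y => Rmax (@?f y) (@?g y)) _ => apply (continuous_Rmax_comp f g)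
  | |- continuous (fun y => Rmin (@?f y) (@?g y)) _ => apply (continuous_Rmin_comp f g)
  | |- continuous _ _ => assumption
  end; cbv beta.

Lemma Rabs_le_dist2 (p q : pt) :
  Rabs (fst q - fst p) <= dist2 p q /\ Rabs (snd q - snd p) <= dist2 p q.
Proof.
  pose proof (pow2_ge_0 (fst p - fst q)); pose proof (pow2_ge_0 (snd p - snd q)).
  unfold dist2. split; rewrite <- sqrt_Rsqr_abs; apply sqrt_le_1_alt; unfold Rsqr; nra.
Qed.

Lemma dist2_le_Rabs (p q : pt) : dist2 p q <= Rabs (fst p - fst q) + Rabs (snd p - snd q).
Proof.
  unfold dist2.
  pose proof (Rabs_pos (fst p - fst q)); pose proof (Rabs_pos (snd p - snd q)).
  rewrite <- (sqrt_Rsqr (Rabs (fst p - fst q) + Rabs (snd p - snd q))) by lra.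
  apply sqrt_le_1_alt. unfold Rsqr.
  rewrite <- (pow2_abs (fst p - fst q)), <- (pow2_abs (snd p - snd q)). nra.
Qed.

Lemma continuous_dist2 (F : pt -> R) (p : pt) : continuous F p ->
  forall eps, 0 < eps -> exists delta, 0 < delta /\
    forall q, dist2 p q < delta -> Rabs (F q - F p) < eps.
Proof.
  intros HF eps Heps.
  destruct (HF _ (locally_ball (F p) (mkposreal eps Heps))) as [delta Hdelta].
  exists delta. split; [apply cond_pos |]. intros q Hq.
  destruct (Rabs_le_dist2 p q) as [H1 H2].
  apply (Hdelta q). split; [exact (Rle_lt_trans _ _ _ H1 Hq) | exact (Rle_lt_trans _ _ _ H2 Hq)].
Qed.

Lemma cont_on_of_continuous (S : pt -> Prop) (f : pt -> pt) :
  (forall p, S p -> continuous (fun q => fst (f q)) p /\ continuous (fun q => snd (f q)) p) ->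
  cont_on S f.
Proof.
  intros Hf p Sp eps Heps. destruct (Hf p Sp) as [H1 H2].
  destruct (continuous_dist2 _ p H1 (eps / 2)) as [d1 [Hd1 C1]]; [lra |].
  destruct (continuous_dist2 _ p H2 (eps / 2)) as [d2 [Hd2 C2]]; [lra |].
  exists (Rmin d1 d2). split; [apply Rmin_pos; assumption |]. intros q _ Hq.
  pose proof (Rmin_l d1 d2); pose proof (Rmin_r d1 d2).
  pose proof (dist2_le_Rabs (f p) (f q)).
  specialize (C1 q ltac:(lra)); specialize (C2 q ltac:(lra)).
  rewrite Rabs_minus_sym in C1, C2. lra.
Qed.

Lemma locally_lt_0 {U : UniformSpace} (h : U -> R) x :
  continuous h x -> h x < 0 -> locally x (fun y => h y < 0).
Proof.
  intros Hh Hx. apply (Hh (fun r => r < 0)). exists (mkposreal (- h x) ltac:(lra)). intros y Hy.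
  apply Rabs_lt_between in Hy. unfold minus, plus, opp in Hy; simpl in Hy. lra.
Qed.

Lemma Rmin_inverse_of_Rmax (f1 f2 g1 g2 : R -> R) x :
  (forall u v, u <= v -> g1 u <= g1 v) -> (forall u v, u <= v -> g2 u <= g2 v) ->
  g1 (f1 x) = x -> g2 (f2 x) = x ->
  Rmin (g1 (Rmax (f1 x) (f2 x))) (g2 (Rmax (f1 x) (f2 x))) = x.
Proof.
  intros Hg1 Hg2 K1 K2. unfold Rmax. destruct (Rle_dec (f1 x) (f2 x)) as [Hle | Hlt].
  - rewrite K2. apply Rmin_right. rewrite <- K1 at 1. apply Hg1, Hle.
  - rewrite K1. apply Rmin_left. rewrite <- K2 at 1. apply Hg2. lra.
Qed.

Lemma Rmax_inverse_of_Rmin (f1 f2 g1 g2 : R -> R) y :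
  (forall u v, u <= v -> f1 u <= f1 v) -> (forall u v, u <= v -> f2 u <= f2 v) ->
  f1 (g1 y) = y -> f2 (g2 y) = y ->
  Rmax (f1 (Rmin (g1 y) (g2 y))) (f2 (Rmin (g1 y) (g2 y))) = y.
Proof.
  intros Hf1 Hf2 K1 K2. unfold Rmin. destruct (Rle_dec (g1 y) (g2 y)) as [Hle | Hlt].
  - rewrite K1. apply Rmax_left. rewrite <- K2 at 2. apply Hf2, Hle.
  - rewrite K2. apply Rmax_right. rewrite <- K1 at 2. apply Hf1. lra.
Qed.

Record row_homeo (D E : R -> R -> Prop) (F G : R -> R -> R) : Prop := {
  row_homeo_maps : forall b s, D b s -> E (F b s) s;
  row_homeo_maps_inv : forall v s, E v s -> D (G v s) s;
  row_homeo_K : forall b s, D b s -> G (F b s) s = b;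
  row_homeo_inv_K : forall v s, E v s -> F (G v s) s = v;
  row_homeo_cont : forall b s, D b s -> continuous (fun p : R * R => F (fst p) (snd p)) (b, s);
  row_homeo_cont_inv : forall v s, E v s -> continuous (fun p : R * R => G (fst p) (snd p)) (v, s)
}.

(* T' and T'' read in the coordinates (b, s) of [chart] below, with C at (c, 0). *)
Definition T'_rows (b s : R) : Prop :=
  (0 < s /\ 0 <= b /\ b + s <= 1) \/ (s = 0 /\ 0 < b < 1).

Definition T''_rows (c v s : R) : Prop :=
  (0 < s /\ 0 <= v /\ v + s <= 1) \/ (s = 0 /\ 0 < v < c).

Section Squeeze.

Variable c : R.
Hypothesis Hc : 0 < c < 1.

Definition outer (s b : R) : R := (1 - s) + (b - (1 - s)) * (1 - c + c * s) / s.
Definition outer_inv (s v : R) : R := (1 - s) + (v - (1 - s)) * s / (1 - c + c * s).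
Definition excess (b s : R) : R := s * (1 - s - c * b) + (b - (1 - s)) * (1 - c + c * s).

(* [excess b s = s * (outer s b - c * b)] for s <> 0, and [excess b 0 < 0] for b < 1: on the
   bottom row [squeeze] is [c * b] without any appeal to division by zero. *)
Definition squeeze (b s : R) : R := c * b + Rmax 0 (excess b s) / s.
Definition unsqueeze (v s : R) : R := Rmin (v / c) (outer_inv s v).

Lemma outer_slope_pos s : 0 <= s -> 0 < 1 - c + c * s.
Proof. intros Hs. nra. Qed.

Lemma outer_le s u v : 0 < s -> u <= v -> outer s u <= outer s v.
Proof.
  intros Hs Huv. unfold outer. pose proof (outer_slope_pos s ltac:(lra)).
  apply Rplus_le_compat_l. unfold Rdiv. apply Rmult_le_compat_r.
  - apply Rlt_le, Rinv_0_lt_compat, Hs.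
  - apply Rmult_le_compat_r; lra.
Qed.

Lemma outer_inv_le s u v : 0 <= s -> u <= v -> outer_inv s u <= outer_inv s v.
Proof.
  intros Hs Huv. unfold outer_inv. pose proof (outer_slope_pos s Hs).
  apply Rplus_le_compat_l. unfold Rdiv. apply Rmult_le_compat_r.
  - apply Rlt_le, Rinv_0_lt_compat; lra.
  - apply Rmult_le_compat_r; lra.
Qed.

Lemma outer_invK s b : 0 < s -> outer_inv s (outer s b) = b.
Proof.
  intros Hs. pose proof (outer_slope_pos s ltac:(lra)). unfold outer_inv, outer. field. lra.
Qed.

Lemma outerK s v : 0 < s -> outer s (outer_inv s v) = v.
Proof.
  intros Hs. pose proof (outer_slope_pos s ltac:(lra)). unfold outer_inv, outer. field. lra.
Qed.

Lemma outer_fix s : 0 < s -> outer s (1 - s) = 1 - s.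
Proof. intros Hs. unfold outer. field. lra. Qed.

Lemma squeeze_upper_rows b s : 0 < s -> squeeze b s = Rmax (c * b) (outer s b).
Proof.
  intros Hs. unfold squeeze.
  replace (excess b s) with (s * (outer s b - c * b)) by (unfold excess, outer; field; lra).
  unfold Rmax. destruct (Rle_dec 0 (s * (outer s b - c * b))), (Rle_dec (c * b) (outer s b));
    first [field; lra | nra].
Qed.

Lemma excess_bottom_row b : b < 1 -> excess b 0 < 0.
Proof. intros Hb. unfold excess. nra. Qed.

Lemma squeeze_bottom_row b : b < 1 -> squeeze b 0 = c * b.
Proof.
  intros Hb. unfold squeeze.
  rewrite Rmax_left by (apply Rlt_le, excess_bottom_row, Hb). rewrite Rdiv_0_l. ring.
Qed.

Lemma unsqueeze_bottom_row v : v <= c -> unsqueeze v 0 = v / c.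
Proof.
  intros Hv. unfold unsqueeze, outer_inv.
  replace (1 - 0 + (v - (1 - 0)) * 0 / (1 - c + c * 0)) with 1 by (field; lra).
  apply Rmin_left. apply Rmult_le_reg_r with c; [lra |]. unfold Rdiv.
  rewrite Rmult_assoc, Rinv_l; lra.
Qed.

Lemma squeeze_left_side s : 0 < s <= 1 -> squeeze 0 s = 0.
Proof.
  intros Hs. rewrite squeeze_upper_rows by lra. rewrite Rmult_0_r. apply Rmax_left.
  unfold outer. pose proof (outer_slope_pos s ltac:(lra)).
  replace ((1 - s) + (0 - (1 - s)) * (1 - c + c * s) / s)
    with (- ((1 - s) * (1 - c) * (1 - s) / s)) by (field; lra).
  assert (0 <= (1 - s) * (1 - c) * (1 - s) / s).
  { apply Rdiv_le_0_compat; [| lra]. apply Rmult_le_pos; [apply Rmult_le_pos |]; lra. }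
  lra.
Qed.

Lemma squeeze_right_side s : 0 < s <= 1 -> squeeze (1 - s) s = 1 - s.
Proof.
  intros Hs. rewrite squeeze_upper_rows, outer_fix by lra. apply Rmax_right. nra.
Qed.

Lemma squeeze_maps b s : T'_rows b s -> T''_rows c (squeeze b s) s.
Proof.
  intros [(Hs & Hb & Hbs) | (-> & Hb)].
  - left. rewrite squeeze_upper_rows by exact Hs.
    assert (Houter : outer s b <= 1 - s).
    { rewrite <- (outer_fix s Hs). apply outer_le; lra. }
    pose proof (Rmax_l (c * b) (outer s b)).
    pose proof (Rmax_lub (c * b) (outer s b) (1 - s) ltac:(nra) Houter).
    repeat split; nra.
  - right. rewrite squeeze_bottom_row by lra. repeat split; nra.
Qed.

Lemma unsqueeze_maps v s : T''_rows c v s -> T'_rows (unsqueeze v s) s.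
Proof.
  intros [(Hs & Hv & Hvs) | (-> & Hv)].
  - left. unfold unsqueeze.
    assert (Hmid : v <= outer_inv s v <= 1 - s).
    { pose proof (outer_slope_pos s ltac:(lra)).
      assert (E1 : outer_inv s v - v = (1 - s - v) * ((1 - c) * (1 - s) / (1 - c + c * s)))
        by (unfold outer_inv; field; lra).
      assert (E2 : 1 - s - outer_inv s v = (1 - s - v) * (s / (1 - c + c * s)))
        by (unfold outer_inv; field; lra).
      assert (0 <= (1 - s - v) * ((1 - c) * (1 - s) / (1 - c + c * s))).
      { apply Rmult_le_pos; [lra |]. apply Rdiv_le_0_compat; [apply Rmult_le_pos |]; lra. }
      assert (0 <= (1 - s - v) * (s / (1 - c + c * s))).
      { apply Rmult_le_pos; [lra |]. apply Rdiv_le_0_compat; lra. }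
      split; lra. }
    assert (0 <= v / c) by (apply Rdiv_le_0_compat; lra).
    pose proof (Rmin_r (v / c) (outer_inv s v)).
    pose proof (Rmin_glb (v / c) (outer_inv s v) 0 ltac:(lra) ltac:(lra)).
    repeat split; lra.
  - right. rewrite unsqueeze_bottom_row by lra. split; [reflexivity |].
    split; [apply Rdiv_lt_0_compat; lra |].
    apply Rmult_lt_reg_r with c; [lra |]. unfold Rdiv. rewrite Rmult_assoc, Rinv_l; lra.
Qed.

Lemma scale_le u v : u <= v -> c * u <= c * v.
Proof. intros. apply Rmult_le_compat_l; lra. Qed.

Lemma unscale_le u v : u <= v -> u / c <= v / c.
Proof. intros. apply Rmult_le_compat_r; [apply Rlt_le, Rinv_0_lt_compat |]; lra. Qed.

Lemma unsqueezeK b s : T'_rows b s -> unsqueeze (squeeze b s) s = b.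
Proof.
  intros [(Hs & _) | (-> & Hb)].
  - rewrite squeeze_upper_rows by exact Hs. unfold unsqueeze.
    apply (Rmin_inverse_of_Rmax (fun b => c * b) (outer s) (fun v => v / c) (outer_inv s)).
    + exact unscale_le.
    + intros u v. apply outer_inv_le. lra.
    + field. lra.
    + apply outer_invK, Hs.
  - rewrite squeeze_bottom_row, unsqueeze_bottom_row by nra. field. lra.
Qed.

Lemma squeezeK v s : T''_rows c v s -> squeeze (unsqueeze v s) s = v.
Proof.
  intros [(Hs & _) | (-> & Hv)].
  - unfold unsqueeze. rewrite squeeze_upper_rows by exact Hs.
    apply (Rmax_inverse_of_Rmin (fun b => c * b) (outer s) (fun v => v / c) (outer_inv s)).
    + exact scale_le.
    + intros u w. apply outer_le, Hs.
    + field. lra.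
    + apply outerK, Hs.
  - rewrite unsqueeze_bottom_row by lra. rewrite squeeze_bottom_row.
    + field. lra.
    + apply Rmult_lt_reg_r with c; [lra |]. unfold Rdiv. rewrite Rmult_assoc, Rinv_l; lra.
Qed.

Lemma continuous_unsqueeze v s : 0 <= s ->
  continuous (fun p : R * R => unsqueeze (fst p) (snd p)) (v, s).
Proof.
  intros Hs. pose proof (outer_slope_pos s Hs).
  unfold unsqueeze, outer_inv. continuity_R; simpl; lra.
Qed.

Lemma continuous_squeeze b s : T'_rows b s ->
  continuous (fun p : R * R => squeeze (fst p) (snd p)) (b, s).
Proof.
  intros [(Hs & _) | (-> & _ & Hb)].
  - unfold squeeze, excess. continuity_R; simpl; lra.
  - apply (continuous_ext_loc _ (fun p : R * R => c * fst p)).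
    + assert (Hneg : locally (b, 0) (fun p : R * R => excess (fst p) (snd p) < 0)).
      { apply locally_lt_0; [unfold excess; continuity_R | apply excess_bottom_row, Hb]. }
      apply (filter_imp (fun p : R * R => excess (fst p) (snd p) < 0)); [| exact Hneg].
      intros p Hp. unfold squeeze.
      rewrite Rmax_left, Rdiv_0_l, Rplus_0_r by lra. reflexivity.
    + continuity_R.
Qed.

Lemma row_homeo_squeeze : row_homeo T'_rows (T''_rows c) squeeze unsqueeze.
Proof.
  split.
  - exact squeeze_maps.
  - exact unsqueeze_maps.
  - exact unsqueezeK.
  - exact squeezeK.
  - exact continuous_squeeze.
  - intros v s [(Hs & _) | (-> & _)]; apply continuous_unsqueeze; lra.
Qed.

End Squeeze.

Section AffineChart.

Variables xa xb xo ya yo : R.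
Hypotheses (Hx : xa <> xb) (Hy : yo < ya).

Definition chart (b s : R) : pt := (xa + b * (xb - xa) + s * (xo - xa), ya + s * (yo - ya)).
Definition coord_s (X : pt) : R := (ya - snd X) / (ya - yo).
Definition coord_b (X : pt) : R := (fst X - xa - coord_s X * (xo - xa)) / (xb - xa).

Lemma coord_s_chart b s : coord_s (chart b s) = s.
Proof. unfold coord_s, chart; simpl. field. lra. Qed.

Lemma coord_b_chart b s : coord_b (chart b s) = b.
Proof.
  unfold coord_b. rewrite coord_s_chart. unfold chart; simpl. field.
  intros E. apply Hx. lra.
Qed.

Lemma chart_coord X : chart (coord_b X) (coord_s X) = X.
Proof.
  destruct X as [x y]. unfold chart, coord_b, coord_s; simpl.
  f_equal; field; repeat split; intros E; lra.
Qed.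

Lemma chart_inj b s b' s' : chart b s = chart b' s' -> b = b' /\ s = s'.
Proof.
  intros E. split.
  - apply (f_equal coord_b) in E. rewrite !coord_b_chart in E. exact E.
  - apply (f_equal coord_s) in E. rewrite !coord_s_chart in E. exact E.
Qed.

Lemma chart_A : chart 0 0 = (xa, ya).
Proof. unfold chart. f_equal; ring. Qed.

Lemma chart_B : chart 1 0 = (xb, ya).
Proof. unfold chart. f_equal; ring. Qed.

Lemma lerp_A_B t : lerp (xa, ya) (xb, ya) t = chart t 0.
Proof. unfold lerp, chart; simpl. f_equal; ring. Qed.

Lemma lerp_A_O t : lerp (xa, ya) (xo, yo) t = chart 0 t.
Proof. unfold lerp, chart; simpl. f_equal; ring. Qed.

Lemma lerp_B_O t : lerp (xb, ya) (xo, yo) t = chart (1 - t) t.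
Proof. unfold lerp, chart; simpl. f_equal; ring. Qed.

Lemma lerp_A_chart t c : lerp (xa, ya) (chart c 0) t = chart (t * c) 0.
Proof. unfold lerp, chart; simpl. f_equal; ring. Qed.

Lemma in_triangle_chart b s :
  in_triangle (xa, ya) (xb, ya) (xo, yo) (chart b s) <-> 0 <= s /\ 0 <= b /\ b + s <= 1.
Proof.
  split.
  - intros (a & b' & s' & Ha & Hb & Hs & Hsum & E).
    assert (E' : chart b s = chart b' s').
    { rewrite E. unfold chart; simpl. f_equal; replace a with (1 - b' - s') by lra; ring. }
    apply chart_inj in E' as [-> ->]. lra.
  - intros (Hs & Hb & Hbs). exists (1 - b - s), b, s. repeat split; try lra.
    unfold chart; simpl. f_equal; ring.
Qed.

Lemma closed_seg_B_chart c v s : c < 1 ->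
  closed_seg (xb, ya) (chart c 0) (chart v s) <-> s = 0 /\ c <= v <= 1.
Proof.
  intros Hc. split.
  - intros (t & Ht & E).
    assert (E' : chart v s = chart (1 - t + t * c) 0).
    { rewrite E. unfold lerp, chart; simpl. f_equal; ring. }
    apply chart_inj in E' as [-> ->].
    pose proof (Rmult_le_pos t (1 - c) ltac:(lra) ltac:(lra)).
    pose proof (Rmult_le_pos (1 - t) (1 - c) ltac:(lra) ltac:(lra)).
    split; [reflexivity | split; lra].
  - intros (-> & Hv). exists ((1 - v) / (1 - c)).
    set (t := (1 - v) / (1 - c)).
    assert (Ht : v = 1 - t * (1 - c)) by (unfold t; field; lra).
    split.
    + split; apply Rmult_le_reg_r with (1 - c); nra.
    + rewrite Ht. unfold lerp, chart; simpl. f_equal; ring.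
Qed.

Lemma continuous_coord_s X : continuous coord_s X.
Proof. unfold coord_s. continuity_R. lra. Qed.

Lemma continuous_coord_b X : continuous coord_b X.
Proof.
  pose proof (continuous_coord_s X). unfold coord_b.
  continuity_R; intros E; apply Hx; lra.
Qed.

Definition row_transport (F : R -> R -> R) (X : pt) : pt :=
  chart (F (coord_b X) (coord_s X)) (coord_s X).

Lemma row_transport_chart F b s : row_transport F (chart b s) = chart (F b s) s.
Proof. unfold row_transport. rewrite coord_b_chart, coord_s_chart. reflexivity. Qed.

Lemma snd_row_transport F X : snd (row_transport F X) = snd X.
Proof. unfold row_transport, chart, coord_s; simpl. field. lra. Qed.

Lemma continuous_row_transport F X :
  continuous (fun p : R * R => F (fst p) (snd p)) (coord_b X, coord_s X) ->
  continuous (fun Y => fst (row_transport F Y)) X /\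
  continuous (fun Y => snd (row_transport F Y)) X.
Proof.
  intros HF.
  assert (HFX : continuous (fun Y => F (coord_b Y) (coord_s Y)) X).
  { apply (continuous_comp_2 coord_b coord_s F);
      [apply continuous_coord_b | apply continuous_coord_s | exact HF]. }
  pose proof (continuous_coord_s X).
  unfold row_transport, chart; simpl. split; continuity_R.
Qed.

Lemma homeo_on_row_transport (S S' : pt -> Prop) (D E : R -> R -> Prop) (F G : R -> R -> R) :
  (forall b s, S (chart b s) <-> D b s) -> (forall v s, S' (chart v s) <-> E v s) ->
  row_homeo D E F G -> homeo_on S S' (row_transport F).
Proof.
  intros HS HS' [maps maps_inv K inv_K cont cont_inv].
  assert (HSX : forall X, S X <-> D (coord_b X) (coord_s X)).
  { intros X. rewrite <- HS, chart_coord. reflexivity. }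
  assert (HS'X : forall X, S' X <-> E (coord_b X) (coord_s X)).
  { intros X. rewrite <- HS', chart_coord. reflexivity. }
  split; [| split].
  - intros X HX%HSX. apply HS', maps, HX.
  - apply cont_on_of_continuous. intros X HX%HSX. apply continuous_row_transport, cont, HX.
  - exists (row_transport G). split; [| split; [| split]].
    + intros Y HY%HS'X. apply HS, maps_inv, HY.
    + apply cont_on_of_continuous. intros Y HY%HS'X.
      apply continuous_row_transport, cont_inv, HY.
    + intros X HX%HSX. unfold row_transport at 2.
      rewrite row_transport_chart, K, chart_coord by exact HX. reflexivity.
    + intros Y HY%HS'X. unfold row_transport at 2.
      rewrite row_transport_chart, inv_K, chart_coord by exact HY. reflexivity.
Qed.

Lemma T'_chart b s :
  (in_triangle (xa, ya) (xb, ya) (xo, yo) (chart b s) /\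
   chart b s <> (xa, ya) /\ chart b s <> (xb, ya))
  <-> T'_rows b s.
Proof.
  rewrite in_triangle_chart, <- chart_A, <- chart_B by assumption. split.
  - intros [(Hs & Hb & Hbs) [NA NB]].
    destruct (Rle_lt_or_eq_dec 0 s Hs) as [Hs' | <-]; [left; lra | right].
    split; [reflexivity |].
    split; apply Rnot_le_lt; intros H.
    + apply NA. f_equal. lra.
    + apply NB. f_equal. lra.
  - intros [(Hs & Hb & Hbs) | (-> & Hb)];
      repeat split; try lra; intros E; apply chart_inj in E; lra.
Qed.

Lemma T''_chart c b s : c < 1 ->
  (in_triangle (xa, ya) (xb, ya) (xo, yo) (chart b s) /\
   chart b s <> (xa, ya) /\
   ~ closed_seg (xb, ya) (chart c 0) (chart b s))
  <-> T''_rows c b s.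
Proof.
  intros Hc.
  rewrite in_triangle_chart, closed_seg_B_chart, <- chart_A by assumption. split.
  - intros [(Hs & Hb & Hbs) [NA NB]].
    destruct (Rle_lt_or_eq_dec 0 s Hs) as [Hs' | <-]; [left; lra | right].
    split; [reflexivity |].
    split; apply Rnot_le_lt; intros H.
    + apply NA. f_equal. lra.
    + apply NB. lra.
  - intros [(Hs & Hb & Hbs) | (-> & Hb)];
      repeat split; try lra; intros E; try (apply chart_inj in E); lra.
Qed.

End AffineChart.

Theorem mainTheorem4 (xa ya xb yb xo yo : R) (C : pt) :
  xa <> xb -> ya = yb -> yo < ya ->
  open_seg (xa, ya) (xb, yb) C ->
  let A : pt := (xa, ya) in
  let B : pt := (xb, yb) in
  let O : pt := (xo, yo) in
  let T' := fun X : pt => in_triangle A B O X /\ X <> A /\ X <> B in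
  let T'' := fun X : pt => in_triangle A B O X /\ X <> A /\ ~ closed_seg B C X in
  exists f : pt -> pt,
    homeo_on T' T'' f /\
    (forall X, T' X -> snd (f X) = snd X) /\
    (forall X, lopen_seg A O X -> f X = X) /\
    (forall X, lopen_seg B O X -> f X = X) /\
    (forall X, open_seg A B X -> open_seg A C (f X)) /\
    (forall Y, open_seg A C Y -> exists X, open_seg A B X /\ f X = Y).
Proof.
  intros Hx <- Hy [c [Hc ->]]. cbv zeta.
  rewrite (lerp_A_B xa xb xo ya yo).
  exists (row_transport xa xb xo ya yo (squeeze c)).
  split; [| split; [| split; [| split; [| split]]]].
  - apply homeo_on_row_transport with T'_rows (T''_rows c) (unsqueeze c); try assumption.
    + apply T'_chart; assumption.
    + intros v s. apply T''_chart; try assumption; lra.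
    + apply row_homeo_squeeze, Hc.
  - intros X _. apply snd_row_transport, Hy.
  - intros X [s [Hs ->]].
    rewrite (lerp_A_O xa xb), row_transport_chart, squeeze_left_side by assumption.
    reflexivity.
  - intros X [s [Hs ->]].
    rewrite (lerp_B_O xa xb), row_transport_chart, squeeze_right_side by assumption.
    reflexivity.
  - intros X [b [Hb ->]].
    rewrite (lerp_A_B xa xb xo ya yo), row_transport_chart, squeeze_bottom_row
      by (assumption || lra).
    exists b. split; [exact Hb |]. rewrite lerp_A_chart. f_equal. ring.
  - intros Y [b [Hb ->]]. exists (chart xa xb xo ya yo b 0). split.
    + exists b. split; [exact Hb | symmetry; apply lerp_A_B].
    + rewrite lerp_A_chart, row_transport_chart, squeeze_bottom_row by (assumption || lra).
      f_equal. ring.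
Qed.
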